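(* Let $N,K,T\ge1$, let $\mathbf{W}\in\mathbb{R}^{N\times K}$ have linearly independent columns $\mathbf{w}_1,\dots,\mathbf{w}_K$, let $\bar{\boldsymbol{\Psi}}_{\mathrm{id}}\in\mathbb{R}^{N\times N}$ and $\bar{\boldsymbol{\Psi}}_{\mathrm{f}}\in\mathbb{R}^{K\times K}$ be diagonal with strictly positive diagonal entries, and let $\alpha_1,\dots,\alpha_T>0$, $\beta_1,\dots,\beta_T>0$ with $\sum_t\alpha_t=\sum_t\beta_t=1$. For $t=1,\dots,T$ set $\boldsymbol{\Psi}_{\mathrm{id},t}=\alpha_t\bar{\boldsymbol{\Psi}}_{\mathrm{id}}$, $\boldsymbol{\Psi}_{\mathrm{f},t}=\beta_t\bar{\boldsymbol{\Psi}}_{\mathrm{f}}$ and $\mathbf{G}_t=\left(\boldsymbol{\Psi}_{\mathrm{id},t}+\mathbf{W}\boldsymbol{\Psi}_{\mathrm{f},t}\mathbf{W}^\top\right)^{-1}$. Let $\mathbf{x}_0\in\mathbb{R}^N$. Then the schedule $$\mathbf{v}_t^*=\alpha_t\mathbf{x}_0+(\beta_t-\alpha_t)\,\mathbf{W}\left(\bar{\boldsymbol{\Psi}}_{\mathrm{f}}^{-1}+\mathbf{W}^\top\bar{\boldsymbol{\Psi}}_{\mathrm{id}}^{-1}\mathbf{W}\right)^{-1}\mathbf{W}^\top\bar{\boldsymbol{\Psi}}_{\mathrm{id}}^{-1}\mathbf{x}_0,\qquad t=1,\dots,T,$$ is optimal for the problem of minimizing $\sum_{t=1}^T\tfrac12\mathbf{v}_t^\top\mathbf{G}_t\mathbf{v}_t$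 subject to $\sum_{t=1}^T\mathbf{v}_t=\mathbf{x}_0$. Equivalently, $\mathbf{v}_t^*=\alpha_t\mathbf{x}_0+(\beta_t-\alpha_t)\sum_{k=1}^K(\widehat{\mathbf{w}}_k^\top\mathbf{x}_0)\,\mathbf{w}_k$, where $\widehat{\mathbf{w}}_k$ is the $k$-th column of $\widehat{\mathbf{W}}=\bar{\boldsymbol{\Psi}}_{\mathrm{id}}^{-1}\mathbf{W}\left(\bar{\boldsymbol{\Psi}}_{\mathrm{f}}^{-1}+\mathbf{W}^\top\bar{\boldsymbol{\Psi}}_{\mathrm{id}}^{-1}\mathbf{W}\right)^{-1}$.
   Context: $\alpha_t$ and $\beta_t$ are the intraday activity profiles of single-stock and index-fund liquidity providers respectively. *)

From HB Require Import structures.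
From mathcomp Require Import all_boot all_order all_algebra.
Set Implicit Arguments. Unset Strict Implicit. Unset Printing Implicit Defensive.
Import Order.TTheory GRing.Theory Num.Theory.
Local Open Scope ring_scope.

Definition pos_diag_mx (R : realFieldType) (n : nat) (A : 'M[R]_n) : Prop :=
  is_diag_mx A /\ (forall i : 'I_n, 0 < A i i).

Definition half_quad (R : realFieldType) (n : nat) (G : 'M[R]_n) (v : 'cV[R]_n) : R :=
  2^-1 * ((v^T *m G *m v) 0 0).

Definition exec_cost (R : realFieldType) (n T : nat) (G : 'I_T -> 'M[R]_n)
    (v : 'I_T -> 'cV[R]_n) : R :=
  \sum_(t < T) half_quad (G t) (v t).

From HB Require Import structures.
From mathcomp Require Import all_boot all_order all_algebra.
From mathcomp Require Import ring.
Import Order.TTheory GRing.Theory Num.Theory.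
Local Open Scope ring_scope.

(* The cost is a sum of convex quadratics, so a feasible schedule is optimal as
   soon as all its marginal costs [G_t v_t] equal a common Lagrange multiplier
   [lambda]: writing [v = v* + d], the cross terms add up to
   [(sum_t d_t)^T lambda = 0].  With [P = Psi_id^-1] and [M] as in the
   statement, the Woodbury-type matrix [Q = P - P W M W^T P] satisfies
   [(a Psi_id + b W Psi_f W^T) Q = a I + (b - a) W M W^T P] for all scalars
   [a, b], so [lambda = Q x0] works: [G_t^-1 lambda = v*_t] for every [t]. *)

Set Implicit Arguments. Unset Strict Implicit.

Section PositiveDefinite.

Variables (R : realFieldType) (n : nat).

Definition qform (A : 'M[R]_n) (u : 'cV[R]_n) : R := (u^T *m A *m u) 0 0.

Definition posdef_mx (A : 'M[R]_n) := A^T = A /\ forall u, u != 0 -> 0 < qform A u.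

Definition psd_mx (A : 'M[R]_n) := A^T = A /\ forall u, 0 <= qform A u.

Lemma posdef_psd (A : 'M[R]_n) : posdef_mx A -> psd_mx A.
Proof.
move=> [symA posA]; split => // u; have [->|/posA/ltW //] := eqVneq u 0.
by rewrite /qform mulmx0 mxE.
Qed.

Lemma pos_diag_mx_posdef (A : 'M[R]_n) : pos_diag_mx A -> posdef_mx A.
Proof.
move=> [/diag_mxP [d ->] posA]; split; first by rewrite tr_diag_mx.
have posd i : 0 < d 0 i by have := posA i; rewrite mxE eqxx mulr1n.
move=> u u_neq0; rewrite /qform mul_mx_diag mxE.
have [i ui_neq0] : exists i, u i 0 != 0.
  apply/existsP; apply: contraNT u_neq0 => /existsPn u0; apply/eqP/colP => i.
  by rewrite mxE; apply/eqP; have := u0 i; rewrite negbK.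
rewrite (bigD1 i) //= !mxE ltr_pwDl //.
  by rewrite mulrAC -expr2 mulr_gt0 // lt_def sqrf_eq0 ui_neq0 sqr_ge0.
by apply: sumr_ge0 => j _; rewrite !mxE mulrAC -expr2 mulr_ge0 ?sqr_ge0 ?ltW.
Qed.

Lemma posdef_unitmx (A : 'M[R]_n) : posdef_mx A -> A \in unitmx.
Proof.
move=> [_ posA]; rewrite -row_free_unit -kermx_eq0; apply: contraT => ker_neq0.
have [i keri_neq0] : exists i, row i (kermx A) != 0.
  apply/existsP; apply: contraNT ker_neq0 => /existsPn ker0.
  by apply/eqP/row_matrixP => i; rewrite row0; apply/eqP; have := ker0 i; rewrite negbK.
have := posA (row i (kermx A))^T; rewrite trmx_eq0 => /(_ keri_neq0).
by rewrite /qform trmxK -row_mul mulmx_ker row0 mul0mx mxE ltxx.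
Qed.

Lemma posdef_invmx (A : 'M[R]_n) : posdef_mx A -> posdef_mx (invmx A).
Proof.
move=> pdA; have unitA := posdef_unitmx pdA; case: pdA => symA posA.
split; first by rewrite trmx_inv symA.
move=> u u_neq0; have Au_neq0 : invmx A *m u != 0.
  by apply: contraNneq u_neq0 => Au0; rewrite -(mulKVmx unitA u) Au0 mulmx0.
have := posA _ Au_neq0; rewrite /qform trmx_mul trmx_inv symA -!mulmxA.
by rewrite (mulmxA A) mulmxV // mul1mx.
Qed.

Lemma posdef_addr (A B : 'M[R]_n) : posdef_mx A -> psd_mx B -> posdef_mx (A + B).
Proof.
move=> [symA posA] [symB nnegB]; split; first by rewrite linearD /= symA symB.
by move=> u u_neq0; rewrite /qform mulmxDr mulmxDl mxE ltr_wpDr ?nnegB ?posA.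
Qed.

Lemma posdefZ (a : R) (A : 'M[R]_n) : 0 < a -> posdef_mx A -> posdef_mx (a *: A).
Proof.
move=> a_gt0 [symA posA]; split; first by rewrite linearZ /= symA.
by move=> u u_neq0; rewrite /qform -scalemxAr -scalemxAl mxE mulr_gt0 ?posA.
Qed.

Lemma psdZ (a : R) (A : 'M[R]_n) : 0 <= a -> psd_mx A -> psd_mx (a *: A).
Proof.
move=> a_ge0 [symA nnegA]; split; first by rewrite linearZ /= symA.
by move=> u; rewrite /qform -scalemxAr -scalemxAl mxE mulr_ge0 ?nnegA.
Qed.

Lemma half_quadD (A : 'M[R]_n) (a d : 'cV[R]_n) : A^T = A ->
  half_quad A (a + d) =
    half_quad A a + (d^T *m (A *m a)) 0 0 + half_quad A d.
Proof.
move=> symA; have cross : a^T *m A *m d = d^T *m A *m a.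
  apply/matrixP => i j; rewrite !ord1 -[in LHS](trmxK (a^T *m A *m d)).
  by rewrite [in LHS]mxE !trmx_mul trmxK symA mulmxA.
rewrite /half_quad mulmxDr [(a + d)^T]linearD /= !mulmxDl cross mulmxA.
move: (a^T *m A *m a) (d^T *m A *m a) (d^T *m A *m d) => p q r.
by rewrite !mxE; field.
Qed.

End PositiveDefinite.

Lemma psd_conj (R : realFieldType) (m n : nat) (A : 'M[R]_n) (W : 'M[R]_(m, n)) :
  psd_mx A -> psd_mx (W *m A *m W^T).
Proof.
move=> [symA nnegA]; split; first by rewrite !trmx_mul trmxK symA mulmxA.
by move=> u; have := nnegA (W^T *m u); rewrite /qform trmx_mul trmxK !mulmxA.
Qed.

Lemma exec_cost_common_multiplier_min (R : realFieldType) (n T : nat)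
    (G : 'I_T -> 'M[R]_n) (vs : 'I_T -> 'cV[R]_n) (lambda : 'cV[R]_n) :
    (forall t, psd_mx (G t)) -> (forall t, G t *m vs t = lambda) ->
  forall v : 'I_T -> 'cV[R]_n, \sum_(t < T) v t = \sum_(t < T) vs t ->
  exec_cost G vs <= exec_cost G v.
Proof.
move=> psdG Gvs v sum_v; rewrite /exec_cost.
under [X in _ <= X]eq_bigr => t _.
  rewrite -[v t](addrNK (vs t)) addrC half_quadD; last by case: (psdG t).
  rewrite Gvs; over.
rewrite !big_split /=.
have -> : \sum_(t < T) ((v t - vs t)^T *m lambda) 0 0 = 0.
  rewrite -summxE -mulmx_suml -linear_sum /= sumrB sum_v subrr.
  by rewrite linear0 mul0mx mxE.
rewrite addr0 lerDl; apply: sumr_ge0 => t _.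
by rewrite /half_quad mulr_ge0 ?invr_ge0 ?ler0n //; case: (psdG t) => _; apply.
Qed.

Section Woodbury.

Variables (R : comUnitRingType) (N K : nat).
Variables (A : 'M[R]_N) (B : 'M[R]_K) (W : 'M[R]_(N, K)).
Hypotheses (unitA : A \in unitmx) (unitB : B \in unitmx).
Hypothesis unitS : invmx B + W^T *m invmx A *m W \in unitmx.

Let P := invmx A.
Let M := invmx (invmx B + W^T *m P *m W).
Let Q := P - P *m W *m M *m W^T *m P.

Lemma mulTmx_woodbury : W^T *m Q = invmx B *m M *m W^T *m P.
Proof.
have WPW : W^T *m P *m W = invmx M - invmx B by rewrite /M invmxK addrC addKr.
rewrite mulmxBr !mulmxA WPW !mulmxBl mulVmx ?unitmx_inv // mul1mx.
by rewrite opprB addrC subrK.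
Qed.

Lemma mulmx_woodbury_scaled (a b : R) :
  (a *: A + W *m (b *: B) *m W^T) *m Q = a%:M + (b - a) *: (W *m M *m W^T *m P).
Proof.
have AQ : A *m Q = 1%:M - W *m M *m W^T *m P.
  by rewrite /Q /P mulmxBr !mulmxA mulmxV // mul1mx.
have WBWQ : W *m B *m W^T *m Q = W *m M *m W^T *m P.
  by rewrite -mulmxA mulTmx_woodbury !mulmxA mulmxK.
rewrite mulmxDl -!scalemxAl AQ -scalemxAr -!scalemxAl WBWQ.
by rewrite scalerBr scalemx1 scalerBl -addrA [- _ + _]addrC.
Qed.

End Woodbury.

Lemma mulmx_sum_col (R : comPzSemiRingType) m n (A : 'M[R]_(m, n)) (u : 'cV[R]_n) :
  A *m u = \sum_k u k 0 *: col k A.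
Proof.
by apply/colP => i /[!(mxE, summxE)]; apply: eq_bigr => k _ /[!mxE]; rewrite mulrC.
Qed.

Unset Implicit Arguments. Set Strict Implicit.

Theorem proposition4 (R : realFieldType) (N K T : nat)
  (hN : (1 <= N)%N) (hK : (1 <= K)%N) (hT : (1 <= T)%N)
  (W : 'M[R]_(N, K)) (hW : \rank W = K)
  (Psi_id : 'M[R]_N) (Psi_f : 'M[R]_K)
  (hPid : pos_diag_mx Psi_id) (hPf : pos_diag_mx Psi_f)
  (alpha beta : 'I_T -> R)
  (halpha : forall t, 0 < alpha t) (hbeta : forall t, 0 < beta t)
  (hsa : \sum_(t < T) alpha t = 1) (hsb : \sum_(t < T) beta t = 1)
  (x0 : 'cV[R]_N) :
  let G := fun t : 'I_T =>
    invmx (alpha t *: Psi_id + W *m (beta t *: Psi_f) *m W^T) in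
  let M := invmx (invmx Psi_f + W^T *m invmx Psi_id *m W) in
  let vstar := fun t : 'I_T =>
    alpha t *: x0 + (beta t - alpha t) *: (W *m M *m W^T *m invmx Psi_id *m x0) in
  let What := invmx Psi_id *m W *m M in
  (\sum_(t < T) vstar t = x0 /\
   forall v : 'I_T -> 'cV[R]_N, \sum_(t < T) v t = x0 ->
     exec_cost G vstar <= exec_cost G v) /\
  (forall t : 'I_T, vstar t =
     alpha t *: x0 + (beta t - alpha t) *:
       \sum_(k < K) (((col k What)^T *m x0) 0 0) *: col k W).
Proof.
move=> G M vstar What.
have pdPid := pos_diag_mx_posdef hPid; have pdP := posdef_invmx pdPid.
have pdPf := pos_diag_mx_posdef hPf.
have pdS : posdef_mx (invmx Psi_f + W^T *m invmx Psi_id *m W).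
  apply: posdef_addr; first exact: posdef_invmx.
  by have := psd_conj W^T (posdef_psd pdP); rewrite trmxK.
have pdC t : posdef_mx (alpha t *: Psi_id + W *m (beta t *: Psi_f) *m W^T).
  apply: posdef_addr; first exact: posdefZ.
  by apply/psd_conj/psdZ; [exact: ltW | exact: posdef_psd].
pose lambda := (invmx Psi_id - invmx Psi_id *m W *m M *m W^T *m invmx Psi_id) *m x0.
have vstarE t : vstar t = (alpha t *: Psi_id + W *m (beta t *: Psi_f) *m W^T) *m lambda.
  rewrite mulmxA mulmx_woodbury_scaled ?posdef_unitmx //.
  by rewrite mulmxDl mul_scalar_mx -scalemxAl.
have Gvstar t : G t *m vstar t = lambda by rewrite vstarE mulKmx ?posdef_unitmx.
have sum_vstar : \sum_(t < T) vstar t = x0.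
  by rewrite big_split /= -!scaler_suml sumrB hsa hsb subrr scale0r addr0 scale1r.
split; [split=> // v sum_v|].
  apply: (exec_cost_common_multiplier_min _ Gvstar); last by rewrite sum_v.
  by move=> t; apply/posdef_psd/posdef_invmx.
move=> t; rewrite /vstar; congr (_ + _ *: _).
have WhatT : What^T = M *m W^T *m invmx Psi_id.
  case: pdP => symP _; case: (posdef_invmx pdS) => symM _.
  by rewrite !trmx_mul symM symP mulmxA.
rewrite -!mulmxA mulmx_sum_col; apply: eq_bigr => k _.
by rewrite tr_col -row_mul WhatT -!mulmxA [in RHS]mxE.
Qed.
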